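(* Let $T$ be a tree, $\tau\in V(T)$ a terminal vertex with unique edge $\{\tau,\alpha\}\in E(T)$, and $T_\tau$ the tree obtained by deleting $\tau$ and the edge $\{\tau,\alpha\}$. Then there is a canonical homeomorphism $$\mathsf L_T\simeq\big(\mathsf L_{T_\tau}\times\mathbb R^{\{\tau\}}\big)\coprod_{\mathsf L_{T_\tau}(\alpha)\times\{0\}}\big(\mathsf L_{T_\tau}(\alpha)\times\mathbb R^{\{\alpha\}}_{\le0}\big),$$ where $\mathsf L_{T_\tau}(\alpha)\times\{0\}$ is the boundary of $\mathsf L_{T_\tau}(\alpha)\times\mathbb R^{\{\alpha\}}_{\le0}$ and is identified with $\mathsf L_{T_\tau}(\alpha)\times\{0\}\subset\mathsf L_{T_\tau}(\alpha)\times\mathbb R^{\{\tau\}}\subset\mathsf L_{T_\tau}\times\mathbb R^{\{\tau\}}$.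
   Context: A tree is a nonempty finite connected acyclic graph with vertex set $V(T)$ and edge set $E(T)$ (two-element subsets of $V(T)$). A terminal vertex is a vertex contained in exactly one edge. Arboreal singularity: for $\alpha\in V(T)$ let $\mathsf L_T(\alpha)=\mathbb R^{V(T)\setminus\{\alpha\}}$ with coordinates $x_\gamma(\alpha)$; $\mathsf L_T$ is the quotient of $\coprod_\alpha\mathsf L_T(\alpha)$ by the equivalence relation generated by identifying, for each edge $\{\alpha,\beta\}$, $\{x_\gamma(\alpha)\}\sim\{x_\gamma(\beta)\}$ whenever $x_\beta(\alpha)=x_\alpha(\beta)\ge0$ and $x_\gamma(\alpha)=x_\gamma(\beta)$ for $\gamma\ne\alpha,\beta$; each $\mathsf L_T(\alpha)$ is regarded as a subspace of $\mathsf L_T$. $\mathbb R^{\{v\}}$ denotes a copy of $\mathbb R$ indexed by the vertex $v$ (coordinate $x_v$). *)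

From Stdlib Require Import Relations.
From HB Require Import structures.
From mathcomp Require Import all_boot all_order all_algebra.
From mathcomp Require Import all_classical all_reals all_analysis.


Import Order.TTheory GRing.Theory Num.Theory numFieldNormedType.Exports.
Local Open Scope ring_scope.
Local Open Scope classical_set_scope.
Local Open Scope quotient_scope.

Definition gen_rel {D : Type} (r : D -> D -> Prop) : rel D :=
  fun x y => `[< clos_refl_sym_trans D r x y >].

Lemma gen_rel_equiv {D : Type} (r : D -> D -> Prop) :
  equiv_class_of (gen_rel r).
Proof.
split.
- by move=> x; apply/asboolP; apply: rst_refl.
- move=> x y; apply/asboolP/asboolP; exact: rst_sym.
- move=> y x z /asboolP Hxy /asboolP Hyz; apply/asboolP; exact: rst_trans Hxy Hyz.
Qed.

Definition gen_equiv {D : Type} (r : D -> D -> Prop) : equiv_rel D :=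
  EquivRelPack (gen_rel_equiv r).

Definition quot_space (D : topologicalType) (r : D -> D -> Prop) :=
  quotient_topology {eq_quot (gen_equiv r)}.

Definition is_homeomorphism (X Y : topologicalType) (f : X -> Y) : Prop :=
  exists g : Y -> X, [/\ cancel f g, cancel g f, continuous f & continuous g].

(* Trees: finite vertex type V, edges = two-element subsets {x,y},     *)
(* encoded by a symmetric irreflexive relation e.                      *)

Definition is_tree (V : finType) (e : rel V) : Prop :=
  [/\ symmetric e, irreflexive e, (0 < #|V|)%N,
      (forall x y : V, connect e x y) &
      (forall s : seq V, uniq s -> (2 < size s)%N -> ~~ cycle e s)].

Definition del_vert (V : finType) (tau : V) : finType := {v : V | v != tau}.
Definition del_edge (V : finType) (e : rel V) (tau : V) : rel (del_vert V tau) :=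
  fun x y => e (val x) (val y).

Definition coord (V : finType) (a : V) : Type := {g : V | g != a}.

(* L_T(a) = R^{V(T) \ {a}} (product topology = euclidean topology) *)
Definition Lpiece (R : realType) (V : finType) (a : V) : topologicalType :=
  {ptws coord V a -> R}.

Definition LpieceF (R : realType) (V : finType) : V -> topologicalType :=
  fun a => Lpiece R V a.

Definition Lpre (R : realType) (V : finType) : topologicalType :=
  {a : V & LpieceF R V a}.

(* coordinate x_g(a) of x in L_T(a), for g != a (value 0 at g = a is
   never used) *)
Definition coordval (R : realType) (V : finType) (a : V) (x : Lpiece R V a)
  (g : V) : R := if @insub V (fun g => g != a) (coord V a) g is Some h
                 then x h else 0.

Definition arb_step (R : realType) (V : finType) (e : rel V) (p q : Lpre R V)
  : Prop :=
  let a := projT1 p in let b := projT1 q in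
  [/\ e a b,
      coordval R V a (projT2 p) b = coordval R V b (projT2 q) a,
      0 <= coordval R V a (projT2 p) b &
      forall g : V, g != a -> g != b ->
        coordval R V a (projT2 p) g = coordval R V b (projT2 q) g].

Definition arboreal (R : realType) (V : finType) (e : rel V) :=
  quot_space (Lpre R V) (arb_step R V e).

Definition nonpos (R : realType) : topologicalType := set_type [set x : R | x <= 0].

Definition PO_left (R : realType) (V : finType) (e : rel V) (tau : V)
  : topologicalType := (arboreal R (del_vert V tau) (del_edge V e tau) * R)%type.

Definition PO_right (R : realType) (V : finType) (tau : V)
  (alpha : del_vert V tau) : topologicalType :=
  (Lpiece R (del_vert V tau) alpha * nonpos R)%type.

Definition PO_F (R : realType) (V : finType) (e : rel V) (tau : V)
  (alpha : del_vert V tau) : bool -> topologicalType :=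
  fun b => if b then PO_left R V e tau else PO_right R V tau alpha.

Definition PO_pre (R : realType) (V : finType) (e : rel V) (tau : V)
  (alpha : del_vert V tau) : topologicalType := {b : bool & PO_F R V e tau alpha b}.

Definition po_step (R : realType) (V : finType) (e : rel V) (tau : V)
  (alpha : del_vert V tau) (p q : PO_pre R V e tau alpha) : Prop :=
  exists (z : Lpiece R (del_vert V tau) alpha) (w : nonpos R),
    [/\ val w = 0,
        p = existT (PO_F R V e tau alpha) false (z, w) &
        q = existT (PO_F R V e tau alpha) true
              (\pi_(arboreal R (del_vert V tau) (del_edge V e tau))
                 (existT (LpieceF R (del_vert V tau)) alpha z), 0)].

Definition pushout (R : realType) (V : finType) (e : rel V) (tau : V)
  (alpha : del_vert V tau) := quot_space (PO_pre R V e tau alpha) (po_step R V e tau alpha).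

Definition restr (R : realType) (V : finType) (tau : V) (b : del_vert V tau)
  (X : V -> R) : Lpiece R (del_vert V tau) b :=
  fun g : coord (del_vert V tau) b => X (val (val g)).

Lemma nonpos_min (R : realType) (r : R) : (Num.min r 0) \in [set x : R | x <= 0].
Proof. by rewrite inE /= ge_min lexx orbT. Qed.

Definition to_nonpos (R : realType) (r : R) : nonpos R :=
  exist _ (Num.min r 0) (nonpos_min R r).

Definition canon_map (R : realType) (V : finType) (e : rel V) (tau : V)
  (alpha : del_vert V tau) (p : Lpre R V) : PO_pre R V e tau alpha :=
  let X := coordval R V (projT1 p) (projT2 p) in
  match @insub V (fun v => v != tau) (del_vert V tau) (projT1 p) with
  | Some b => existT (PO_F R V e tau alpha) true
      (\pi_(arboreal R (del_vert V tau) (del_edge V e tau)) (existT (LpieceF R (del_vert V tau)) b (restr R V tau b X)),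
       X tau)
  | None =>
      if 0 <= X (val alpha) then
        existT (PO_F R V e tau alpha) true
          (\pi_(arboreal R (del_vert V tau) (del_edge V e tau)) (existT (LpieceF R (del_vert V tau)) alpha (restr R V tau alpha X)),
           X (val alpha))
      else existT (PO_F R V e tau alpha) false (restr R V tau alpha X, to_nonpos R (X (val alpha)))
  end.

From Pilot Require Import Defs.
From Stdlib Require Import Relations.
From HB Require Import structures.
From mathcomp Require Import all_boot all_order all_algebra.
From mathcomp Require Import all_classical all_reals all_analysis.
From mathcomp Require Import lra.
Import Order.TTheory GRing.Theory Num.Theory numFieldNormedType.Exports.
Local Open Scope ring_scope.
Local Open Scope classical_set_scope.
Local Open Scope quotient_scope.

(* A point of L_T(b), b <> tau, is a point of L_{T_tau}(b) together with its
   coordinate x_tau, and the identifications of L_T along edges avoiding tau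
   are exactly those of L_{T_tau}; so these pieces make up L_{T_tau} x R^{tau}.
   The remaining piece L_T(tau) = L_{T_tau}(alpha) x R^{alpha} splits along
   the sign of x_alpha: the half x_alpha >= 0 is identified with a part of
   L_T(alpha), hence already lies in L_{T_tau} x R^{tau}, and the half
   x_alpha <= 0 is the extra summand, glued along x_alpha = 0.  The inverse
   map is continuous on L_{T_tau} x R^{tau} because, R being locally compact,
   the product of a quotient map with the identity of R is a quotient map. *)

Lemma comp_continuous {X Y Z : topologicalType} {f : X -> Y} {g : Y -> Z} :
  continuous f -> continuous g -> continuous (fun x => g (f x)).
Proof. by move=> cf cg x; exact: continuous_comp (cf x) (cg (f x)). Qed.

Lemma pair_continuous {X Y Z : topologicalType} {f : X -> Y} {g : X -> Z} :
  continuous f -> continuous g -> continuous (fun x => (f x, g x)).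
Proof. by move=> cf cg x; apply: cvg_pair; [exact: cf|exact: cg]. Qed.

Lemma fst_continuous (X Y : topologicalType) : continuous (@fst X Y).
Proof. by move=> p; exact: cvg_fst. Qed.

Lemma snd_continuous (X Y : topologicalType) : continuous (@snd X Y).
Proof. by move=> p; exact: cvg_snd. Qed.

Lemma ptws_continuous (I : Type) (Y T : topologicalType)
    (f : Y -> {ptws I -> T}) :
  (forall i, continuous (fun y => f y i)) -> continuous f.
Proof.
move=> fi y; apply/cvg_sup => i A /= [B [[C oC <-] Cfy] CA].
apply: (@filterS _ _ _ (@^~ i @^-1` C)) => //.
by apply: fi; exact: open_nbhs_nbhs.
Qed.

Lemma sigT_continuous (I : choiceType) (X : I -> topologicalType)
    (Z : topologicalType) (f : {i & X i} -> Z) :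
  (forall i, continuous (fun x => f (existT X i x))) -> continuous f.
Proof. by move=> fi [i x]; exact: fi. Qed.

Lemma sigT_prod_continuous (I : choiceType) (X : I -> topologicalType)
    (Y Z : topologicalType) (f : ({i & X i} * Y)%type -> Z) :
  (forall i, continuous (fun p : X i * Y => f (existT X i p.1, p.2))) ->
  continuous f.
Proof.
move=> fi [[i x] y] U /= /(fi i (x, y)) [[A B] /= [nA nB] AB].
exists (existT X i @` A, B) => /=; first by split => //; exact: existT_nbhs.
by move=> [q t] /= [[x' Ax' <-] Bt]; exact: (AB (x', t)).
Qed.

Lemma continuous_if_ge0 (R : realType) (Y Z : topologicalType) (c : Y -> R)
    (f g : Y -> Z) :
  continuous c -> continuous f -> continuous g ->
  (forall y, c y = 0 -> f y = g y) ->
  continuous (fun y => if 0 <= c y then f y else g y).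
Proof.
move=> cc cf cg fg y U /= nU; rewrite nbhs_filterE /=.
case: (ltgtP (c y) 0) => cy; move: nU.
- rewrite leNgt cy /= => nU; have ngU : nbhs y (g @^-1` U) := cg y U nU.
  have neg : nbhs y (c @^-1` [set r | r < 0]).
    by apply: cc; apply: open_nbhs_nbhs; split => //; exact: open_lt.
  apply: filter_app ngU; apply: filterS neg => z /= zneg gz.
  by rewrite leNgt zneg.
- rewrite (ltW cy) /= => nU; have nfU : nbhs y (f @^-1` U) := cf y U nU.
  have pos : nbhs y (c @^-1` [set r | r > 0]).
    by apply: cc; apply: open_nbhs_nbhs; split => //; exact: open_gt.
  apply: filter_app nfU; apply: filterS pos => z /= zpos fz.
  by rewrite (ltW zpos).
- rewrite cy lexx => nU.
  have nfU : nbhs y (f @^-1` U) := cf y U nU.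
  rewrite fg // in nU; have ngU : nbhs y (g @^-1` U) := cg y U nU.
  by apply: filter_app ngU; apply: filterS nfU => z /= fz gz; case: ifP.
Qed.

Lemma compact_tube {D T : topologicalType} {O : set (D * T)} {K : set T}
    {x : D} :
  open O -> compact K -> (forall t, K t -> O (x, t)) ->
  \forall x' \near x, forall t, K t -> O (x', t).
Proof.
move=> oO /compact_near_coveringP cK xK.
apply: (cK D (nbhs x) (fun x' t => O (x', t))) => t Kt.
have [[A B] /= [nA nB] AB] : nbhs (x, t) O.
  by apply: open_nbhs_nbhs; split => //; exact: xK.
by exists (B, A) => // -[t' x'] /= [Bt' Ax']; exact: (AB (x', t')).
Qed.

Lemma quotient_open_tube {D : topologicalType} {Q : quotType D}
    {T Z : topologicalType} {f : (quotient_topology Q * T)%type -> Z}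
    {W : set Z} {K : set T} :
  open ((fun p : D * T => f (\pi_(quotient_topology Q) p.1, p.2)) @^-1` W) ->
  compact K ->
  open [set u : quotient_topology Q | forall t, K t -> W (f (u, t))].
Proof.
move=> oO cK; rewrite /open /= /quotient_open openE => x /= xK.
by apply: filterS (compact_tube oO cK xK) => y yK t Kt; exact: yK.
Qed.

(* [\pi x id] is a quotient map because [R] is locally compact: a
   neighbourhood of [t0] contains a compact interval, to which the tube
   lemma applies. *)
Lemma quotient_prod_continuous (D : topologicalType) (Q : quotType D)
    (R : realType) (Z : topologicalType)
    (f : (quotient_topology Q * R)%type -> Z) :
  continuous (fun p : D * R => f (\pi_(quotient_topology Q) p.1, p.2)) ->
  continuous f.
Proof.
move=> cfpi; apply/continuousP => W oW; rewrite openE => -[u0 t0] /= Wf0.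
have oO := (continuousP _).1 cfpi W oW.
have [[A B] /= [nA /nbhs_ballP [eps /= eps0 epsB]] AB] :
    nbhs (repr u0, t0)
      ((fun p : D * R => f (\pi_(quotient_topology Q) p.1, p.2)) @^-1` W).
  by apply: open_nbhs_nbhs; split => //=; rewrite reprK.
pose K := `[t0 - eps / 2, t0 + eps / 2].
have KB : K `<=` B.
  move=> t; rewrite /K /= in_itv /= => /andP [? ?]; apply: epsB.
  by rewrite /ball /= ltr_norml; apply/andP; split; lra.
pose Aq := [set u : quotient_topology Q | forall t, K t -> W (f (u, t))].
have oAq : open Aq := quotient_open_tube oO (@segment_compact R _ _).
have Aqu0 : Aq u0.
  move=> t Kt; rewrite -[u0]reprK.
  exact: (AB (repr u0, t)) (conj (nbhs_singleton nA) (KB t Kt)).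
exists (Aq, ball t0 (eps / 2)) => /=.
  by split; [exact: open_nbhs_nbhs | apply: nbhsx_ballx; lra].
case=> u t /= [Aqu]; rewrite /ball /= ltr_norml => /andP [? ?]; apply: Aqu.
by rewrite /K /= in_itv /=; apply/andP; split; lra.
Qed.

Section GeneratedQuotient.
Context {D : topologicalType} {r : D -> D -> Prop}.

Lemma quot_space_step x y :
  r x y -> \pi_(quot_space D r) x = \pi_(quot_space D r) y.
Proof. by move=> rxy; apply/eqquotP/asboolP; exact: rst_step. Qed.

Lemma quot_space_lift {Z : Type} {f : D -> Z} :
  (forall x y, r x y -> f x = f y) ->
  forall x, f (repr (\pi_(quot_space D r) x)) = f x.
Proof.
move=> fr x; have fr_closure y z : clos_refl_sym_trans D r y z -> f y = f z.
  by elim=> [{}y {}z /fr|//|{}y {}z _ ->|{}y {}z w _ -> _ ->].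
apply: fr_closure; apply/asboolP/(@eqquotP _ _ {eq_quot (gen_equiv r)}).
by rewrite reprK.
Qed.

End GeneratedQuotient.

Lemma pi_existT_continuous (I : choiceType) (X : I -> topologicalType)
    (r : {i & X i} -> {i & X i} -> Prop) (i : I) (Y : topologicalType)
    (f : Y -> X i) :
  continuous f ->
  continuous (fun y => \pi_(quot_space {i & X i} r) (existT X i (f y))).
Proof.
move=> cf; apply: (comp_continuous _ pi_continuous).
exact: comp_continuous cf (existT_continuous i).
Qed.

Section Coordinates.
Context {R : realType} {V : finType}.

Definition piece_of (a : V) (X : V -> R) : Lpiece R V a := fun g => X (val g).

Lemma Lpiece_ext (a : V) (x y : Lpiece R V a) : (forall g, x g = y g) -> x = y.
Proof. exact: functional_extensionality_dep. Qed.

Lemma coordvalE {a : V} (x : Lpiece R V a) (g : Defs.coord V a) :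
  coordval R V a x (val g) = x g.
Proof.
by rewrite /coordval; case: insubP => [u _ /val_inj -> //|]; rewrite (valP g).
Qed.

Lemma coordval_piece_of (a g : V) (X : V -> R) :
  g != a -> coordval R V a (piece_of a X) g = X g.
Proof.
by move=> ga; have := coordvalE (piece_of a X) (exist _ g ga : Defs.coord V a).
Qed.

Lemma coordval_continuous (a g : V) :
  continuous (fun x : Lpiece R V a => coordval R V a x g).
Proof.
rewrite /coordval; case: insub => [h|]; last exact: cst_continuous.
exact: (@proj_continuous _ (fun=> (R : topologicalType)) h).
Qed.

Lemma arb_step_sym (e : rel V) : symmetric e ->
  forall p q, arb_step R V e p q -> arb_step R V e q p.
Proof.
move=> e_sym [a x] [b y] [/= eab xy x_ge0 xyE]; split => //=.
- by rewrite e_sym.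
- by rewrite -xy.
- by move=> g gb ga; rewrite xyE.
Qed.

End Coordinates.

Lemma to_nonpos_continuous (R : realType) : continuous (to_nonpos R).
Proof.
move=> r A /= [B [[C oC <-] Cr] CA].
apply: (@filterS _ _ _ ((fun s : R => Num.min s 0) @^-1` C)) => [s /= Cs|].
  exact: CA.
have min0_continuous : continuous (fun s : R => Num.min s 0).
  apply: (@comp_continuous _ _ _ (fun s : R => (s, 0 : R)) _ _ min_continuous).
  by apply: pair_continuous => ?; [exact: cvg_id|exact: cvg_cst].
by apply: min0_continuous; exact: open_nbhs_nbhs.
Qed.

Section DeleteVertex.
Context {R : realType} {V : finType} {tau : V}.
Local Notation W := (del_vert V tau).

(* [(y, t)] in L_{T_tau}(b) x R^{tau}, as the coordinates of a point of L_T(b). *)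
Definition extend_coords (b : W) (y : Lpiece R W b) (t : R) : V -> R :=
  fun g => if (insub g : option W) is Some g' then coordval R W b y g' else t.

Lemma extend_coords_tau b y t : extend_coords b y t tau = t.
Proof. by rewrite /extend_coords insubF // eqxx. Qed.

Lemma extend_coords_val b y t (g : W) :
  extend_coords b y t (val g) = coordval R W b y g.
Proof. by rewrite /extend_coords valK. Qed.

Lemma coordval_restr (b w : W) (X : V -> R) :
  w != b -> coordval R W b (restr R V tau b X) w = X (val w).
Proof.
by move=> wb; have := coordvalE (restr R V tau b X) (exist _ w wb : Defs.coord W b).
Qed.

Lemma restr_continuous (a : V) (b : W) :
  continuous (fun x : Lpiece R V a => restr R V tau b (coordval R V a x)).
Proof. by apply: ptws_continuous => g; exact: coordval_continuous. Qed.

Lemma val_coord_neq {b : W} (g : Defs.coord W b) : val (val g) != val b.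
Proof. by apply: contra (valP g) => /eqP /val_inj ->. Qed.

Lemma piece_of_extend_restr (b : W) (x : Lpiece R V (val b)) :
  piece_of (val b) (extend_coords b (restr R V tau b (coordval R V (val b) x))
                      (coordval R V (val b) x tau)) = x.
Proof.
apply: Lpiece_ext => g; rewrite /piece_of -(coordvalE x g).
case: (eqVneq (val g) tau) => [->|gtau]; first by rewrite extend_coords_tau.
rewrite -[val g]/(val (exist _ (val g) gtau : W)) extend_coords_val coordval_restr //.
by apply: contra (valP g) => /eqP/(congr1 val)/eqP.
Qed.

Lemma restr_extend_coords (b : W) y t :
  restr R V tau b (coordval R V (val b) (piece_of (val b) (extend_coords b y t))) = y.
Proof.
apply: Lpiece_ext => g.
by rewrite /restr coordval_piece_of ?val_coord_neq // extend_coords_val coordvalE.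
Qed.

Lemma extend_coords_continuous (b : W) (g : V) :
  continuous (fun p : Lpiece R W b * R => extend_coords b p.1 p.2 g).
Proof.
rewrite /extend_coords; case: insub => [g'|]; last exact: snd_continuous.
exact: comp_continuous (fst_continuous _ _) (coordval_continuous _ _).
Qed.

End DeleteVertex.

Section Arboreal.
Variables (R : realType) (V : finType) (e : rel V) (tau : V) (alpha : del_vert V tau).
Hypotheses (e_sym : symmetric e) (e_irr : irreflexive e).
Hypothesis e_tau_alpha : e tau (val alpha).
Hypothesis e_tau_uniq : forall b : V, e tau b -> b = val alpha.

Local Notation W := (del_vert V tau).
Local Notation LT := (arboreal R V e).
Local Notation LTt := (arboreal R W (del_edge V e tau)).
Local Notation PO := (pushout R V e tau alpha).
Local Notation inPO b := (existT (PO_F R V e tau alpha) b).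

Lemma alpha_neq_tau : val alpha != tau.
Proof. exact: valP alpha. Qed.

(* [(z, w)] in L_{T_tau}(alpha) x R^{alpha}_{<=0}, as the coordinates of a
   point of L_T(tau). *)
Definition right_coords (z : Lpiece R W alpha) (w : R) : V -> R :=
  fun g => if g == val alpha then w else extend_coords alpha z 0 g.

Lemma piece_of_right_coords_restr (x : Lpiece R V tau) :
  piece_of tau (right_coords (restr R V tau alpha (coordval R V tau x))
                  (coordval R V tau x (val alpha))) = x.
Proof.
apply: Lpiece_ext => g; rewrite /piece_of /right_coords -(coordvalE x g).
case: (eqVneq (val g) (val alpha)) => [->//|galpha].
rewrite -[val g]/(val (exist _ (val g) (valP g) : W)) extend_coords_val.
by rewrite coordval_restr.
Qed.

Lemma restr_right_coords z w :
  restr R V tau alpha (coordval R V tau (piece_of tau (right_coords z w))) = z.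
Proof.
apply: Lpiece_ext => g; rewrite /restr coordval_piece_of ?(valP (val g)) //.
by rewrite /right_coords (negbTE (val_coord_neq g)) extend_coords_val coordvalE.
Qed.

Lemma coordval_right_coords z w :
  coordval R V tau (piece_of tau (right_coords z w)) (val alpha) = w.
Proof. by rewrite coordval_piece_of ?alpha_neq_tau // /right_coords eqxx. Qed.

Definition canon_inv_left_rep (t : R) (q : Lpre R W) : LT :=
  \pi_LT (existT (LpieceF R V) (val (projT1 q))
            (piece_of (val (projT1 q)) (extend_coords (projT1 q) (projT2 q) t))).

Definition canon_inv_left (p : PO_left R V e tau) : LT :=
  canon_inv_left_rep p.2 (repr p.1).

Definition canon_inv_right (p : PO_right R V tau alpha) : LT :=
  \pi_LT (existT (LpieceF R V) tau (piece_of tau (right_coords p.1 (val p.2)))).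

Definition canon_inv_pre (s : PO_pre R V e tau alpha) : LT :=
  let: existT b p := s in
  (match b return PO_F R V e tau alpha b -> LT with
   | true => canon_inv_left
   | false => canon_inv_right end) p.

Definition canon_quot (u : LT) : PO := \pi_PO (canon_map R V e tau alpha (repr u)).

Definition canon_inv (v : PO) : LT := canon_inv_pre (repr v).

Lemma canon_inv_left_rep_step t p q :
  arb_step R W (del_edge V e tau) p q ->
  canon_inv_left_rep t p = canon_inv_left_rep t q.
Proof.
case: p q => [a y] [b z] [/= eab yz y_ge0 yzE].
apply: quot_space_step.
have ba : val b != val a.
  by apply: contraTneq eab; rewrite /del_edge => ->; rewrite e_irr.
have ab : val a != val b by rewrite eq_sym.
rewrite /arb_step; cbn [projT1 projT2].
rewrite !coordval_piece_of // !extend_coords_val.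
split=> // g ga gb; rewrite !coordval_piece_of //.
case: (eqVneq g tau) => [->|gtau]; first by rewrite !extend_coords_tau.
rewrite -[g]/(val (exist _ g gtau : W)) !extend_coords_val; apply: yzE.
- by apply: contra ga => /eqP <-.
- by apply: contra gb => /eqP <-.
Qed.

Lemma canon_inv_leftE q t :
  canon_inv_left (\pi_LTt q, t) = canon_inv_left_rep t q.
Proof. exact: (quot_space_lift (canon_inv_left_rep_step t)). Qed.

Lemma canon_inv_pre_step s s' :
  po_step R V e tau alpha s s' -> canon_inv_pre s = canon_inv_pre s'.
Proof.
move=> [z [w [w0 -> ->]]] /=; rewrite canon_inv_leftE; apply: quot_space_step.
have tau_alpha : tau != val alpha by rewrite eq_sym alpha_neq_tau.
rewrite /arb_step /= !coordval_piece_of ?alpha_neq_tau //.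
rewrite extend_coords_tau /right_coords eqxx w0; split=> // g gtau galpha.
by rewrite !coordval_piece_of // /right_coords (negbTE galpha).
Qed.

Lemma canon_invE s : canon_inv (\pi_PO s) = canon_inv_pre s.
Proof. exact: (quot_space_lift canon_inv_pre_step). Qed.

Lemma canon_map_step_ne_tau p q :
  arb_step R V e p q -> projT1 q != tau ->
  \pi_PO (canon_map R V e tau alpha p) = \pi_PO (canon_map R V e tau alpha q).
Proof.
case: p q => [a x] [b y] [/= eab xy x_ge0 xyE] btau; rewrite /canon_map /=.
case: insubP => [a' _ ea|/negPn/eqP ea];
  (case: insubP => [b' _ eb|/negP nb]; last by case: (nb btau)); subst a b.
- have ba : b' != a' by apply: contraTneq eab => ->; rewrite e_irr.
  have ab : a' != b' by rewrite eq_sym.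
  congr (\pi_PO (inPO true (_, _))); last first.
    by apply: xyE; rewrite eq_sym; [exact: (valP a')|exact: (valP b')].
  apply: quot_space_step; rewrite /arb_step; cbn [projT1 projT2].
  rewrite !coordval_restr //; split=> // g ga gb; rewrite !coordval_restr //.
  by apply: xyE; [apply: contra ga|apply: contra gb] => /eqP/val_inj ->.
- have eb : b' = alpha by apply/val_inj/e_tau_uniq.
  subst b'.
  rewrite x_ge0 xy; congr (\pi_PO (inPO true (\pi_LTt (existT _ alpha _), _))).
  apply: Lpiece_ext => g; rewrite /restr; apply: xyE; first exact: valP (val g).
  exact: val_coord_neq.
Qed.

Lemma canon_map_step p q :
  arb_step R V e p q ->
  \pi_PO (canon_map R V e tau alpha p) = \pi_PO (canon_map R V e tau alpha q).
Proof.
move=> pq; have [qtau|] := eqVneq (projT1 q) tau; last exact: canon_map_step_ne_tau.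
symmetry; apply: canon_map_step_ne_tau; first exact: arb_step_sym.
case: pq => epq _ _ _; rewrite qtau in epq.
by apply: contraTneq epq => ->; rewrite e_irr.
Qed.

Lemma canon_quotE p : canon_quot (\pi_LT p) = \pi_PO (canon_map R V e tau alpha p).
Proof. exact: (quot_space_lift canon_map_step). Qed.

Lemma canon_inv_pre_canon_map p :
  canon_inv_pre (canon_map R V e tau alpha p) = \pi_LT p.
Proof.
case: p => a x; rewrite /canon_map /=.
case: insubP => [a' _ ea|/negPn/eqP ea]; subst a => /=.
  by rewrite canon_inv_leftE /canon_inv_left_rep /= piece_of_extend_restr.
have tau_alpha : tau != val alpha by rewrite eq_sym alpha_neq_tau.
case: ifP => [x_ge0|/negbT]; rewrite /=.
  rewrite canon_inv_leftE; symmetry; apply: quot_space_step.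
  rewrite /arb_step; cbn [projT1 projT2].
  rewrite !coordval_piece_of ?alpha_neq_tau // extend_coords_tau.
  split=> // g gtau galpha; rewrite coordval_piece_of //.
  by rewrite -[g]/(val (exist _ g gtau : W)) extend_coords_val coordval_restr.
rewrite -ltNge => x_lt0; rewrite /canon_inv_right /= min_l ?ltW //.
by rewrite piece_of_right_coords_restr.
Qed.

Lemma canon_quot_canon_inv_left p :
  canon_quot (canon_inv_left p) = \pi_PO (inPO true p).
Proof.
case: p => u t; rewrite /canon_inv_left /canon_inv_left_rep /=.
case Eu: (repr u) => [b y] /=.
rewrite canon_quotE /canon_map /= valK /= coordval_piece_of; last first.
  by rewrite eq_sym; exact: (valP b).
by rewrite extend_coords_tau restr_extend_coords -Eu reprK.
Qed.

Lemma canon_quot_canon_inv_right p :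
  canon_quot (canon_inv_right p) = \pi_PO (inPO false p).
Proof.
case: p => z w; rewrite /canon_inv_right canon_quotE /canon_map /=.
rewrite insubF ?eqxx //= coordval_right_coords restr_right_coords.
have w_le0 : val w <= 0 by move: (valP w); rewrite inE.
case: ifP => [w_ge0|w_lt0].
  have w0 : val w = 0 by apply/eqP; rewrite eq_le w_le0 w_ge0.
  symmetry; apply: quot_space_step; exists z, w.
  by split=> //; congr (inPO true (_, _)); exact: w0.
by congr (\pi_PO (inPO false (z, _))); apply: val_inj; rewrite /= min_l.
Qed.

Lemma canon_quot_canon_inv_pre s : canon_quot (canon_inv_pre s) = \pi_PO s.
Proof.
case: s => -[] p.
- exact: canon_quot_canon_inv_left.
- exact: canon_quot_canon_inv_right.
Qed.

Lemma canon_left_continuous (a : V) (b : W) (g : V) :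
  continuous (fun x : Lpiece R V a =>
    \pi_PO (inPO true (\pi_LTt (existT _ b (restr R V tau b (coordval R V a x))),
                       coordval R V a x g))).
Proof.
apply: pi_existT_continuous; apply: pair_continuous; last exact: coordval_continuous.
by apply: pi_existT_continuous; exact: restr_continuous.
Qed.

Lemma canon_map_continuous :
  continuous (fun p => \pi_PO (canon_map R V e tau alpha p)).
Proof.
apply: sigT_continuous => a; rewrite /canon_map /=.
case: insubP => [b _ <-|/negPn/eqP ->] /=; first exact: canon_left_continuous.
under [X in continuous X]eq_fun => x do rewrite fun_if.
apply: continuous_if_ge0 => [|||x x0].
- exact: coordval_continuous.
- exact: canon_left_continuous.
- apply: pi_existT_continuous; apply: pair_continuous; first exact: restr_continuous.
  exact: comp_continuous (coordval_continuous _ _) (to_nonpos_continuous R).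
- symmetry; apply: quot_space_step.
  exists (restr R V tau alpha (coordval R V tau x)).
  exists (to_nonpos R (coordval R V tau x (val alpha))).
  by rewrite /= x0 minxx.
Qed.

Lemma canon_inv_right_continuous : continuous canon_inv_right.
Proof.
apply: pi_existT_continuous; apply: ptws_continuous => g.
rewrite /piece_of /right_coords.
case: (val g == val alpha).
  apply: comp_continuous (snd_continuous _ _) _.
  exact: (@initial_continuous _ R (@set_val R [set x : R | x <= 0])).
apply: (@comp_continuous _ _ _ (fun y : PO_right R V tau alpha => (y.1, 0 : R)) _
  _ (extend_coords_continuous alpha (val g))).
by apply: pair_continuous; [exact: fst_continuous|exact: cst_continuous].
Qed.

Lemma canon_inv_left_continuous : continuous canon_inv_left.
Proof.
apply: quotient_prod_continuous.
under [X in continuous X]eq_fun => p do rewrite canon_inv_leftE.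
apply: sigT_prod_continuous => b; apply: pi_existT_continuous.
by apply: ptws_continuous => g; exact: (extend_coords_continuous b (val g)).
Qed.

Lemma canon_inv_pre_continuous : continuous canon_inv_pre.
Proof.
apply: sigT_continuous => -[].
- exact: canon_inv_left_continuous.
- exact: canon_inv_right_continuous.
Qed.

End Arboreal.

Theorem lemma2p7 (R : realType) (V : finType) (e : rel V) (tau : V)
    (alpha : del_vert V tau) :
  is_tree V e ->
  e tau (val alpha) ->
  (forall b : V, e tau b -> b = val alpha) ->
  exists h : arboreal R V e -> pushout R V e tau alpha,
    is_homeomorphism (arboreal R V e) (pushout R V e tau alpha) h /\
    (forall p : Lpre R V,
       h (\pi_(arboreal R V e) p)
       = \pi_(pushout R V e tau alpha) (canon_map R V e tau alpha p)).
Proof.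
case=> e_sym e_irr _ _ _ e_tau_alpha e_tau_uniq.
exists (canon_quot R V e tau alpha); split; last exact: canon_quotE.
exists (canon_inv R V e tau alpha); split.
- move=> u; rewrite -[u]reprK canon_quotE // canon_invE //.
  exact: canon_inv_pre_canon_map.
- by move=> v; rewrite -[v]reprK canon_invE //; exact: canon_quot_canon_inv_pre.
- apply/quotient_continuous; rewrite /comp.
  under [X in continuous X]eq_fun do rewrite canon_quotE //.
  exact: canon_map_continuous.
- apply/quotient_continuous; rewrite /comp.
  under [X in continuous X]eq_fun do rewrite canon_invE //.
  exact: canon_inv_pre_continuous.
Qed.
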